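(* Let $(\mathcal{S},\mathcal{A},P,r,\gamma)$ be a discounted Markov decision process with finite state set $\mathcal{S}$ of size $n$, finite action set $\mathcal{A}$, transition probabilities $P(s'\mid s,a)$, expected rewards $r(s,a)$ and discount factor $\gamma\in[0,1)$. Let $V^*$ be the optimal value function and suppose: (i) (uniqueness of the optimal policy) there is a deterministic policy $\pi^*$ and a number $\delta>0$ such that for every state $s$ and every action $a'\neq \pi^*(s)$, $$ r(s,\pi^*(s))+\gamma\sum_{s'}P(s'\mid s,\pi^*(s))V^*(s') - r(s,a') - \gamma\sum_{s'}P(s'\mid s,a')V^*(s') \ge \delta;$$ (ii) the Markov chain with transition matrix $P^*(s,s')=P(s'\mid s,\pi^*(s))$ is irreducible and aperiodic. Let $N\ge 1$ be an integer such that all entries of $(P^* )^N$ are strictly positive. Run synchronous value iteration without learning rate from an initial vector $V_0\in\mathbb{R}^{\mathcal{S}}$, i.e. $V_{t+1}(s)=\max_{a}\big[r(s,a)+\gamma\sum_{s'}P(s'\mid s,a)V_t(s')\big]$ for all $s$, and let $e_t=V_t-V^*$. Then there exists $\tau\in(0,1)$ such that $$\operatorname{span}(e_N)\le \gamma^N\,\tau\,\operatorname{span}(e_0).$$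
   Context: For a vector $e\in\mathbb{R}^{\mathcal{S}}$, $\operatorname{span}(e)=\max_s e(s)-\min_s e(s)$. The optimal value function is $V^*(s)=\max_\pi \mathbb{E}\big[\sum_{t\ge0}\gamma^t r(s_t,\pi(s_t))\mid s_0=s\big]$. Such an $N$ exists under (ii) (e.g. $N=n^2-2n+2$ works). The constant $\tau$ may depend on the MDP and on the initial vector $V_0$. *)

From HB Require Import structures.
From mathcomp Require Import all_boot all_order all_algebra.
From mathcomp Require Import all_classical all_reals all_analysis.
Set Implicit Arguments. Unset Strict Implicit. Unset Printing Implicit Defensive.
Import Order.TTheory GRing.Theory Num.Theory numFieldNormedType.Exports.
Local Open Scope ring_scope.
Local Open Scope classical_set_scope.

Section MDP.
Variables (R : realType) (n : nat) (A : finType).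
(* states are 'I_n; P s a s' = P(s' | s, a); r s a = r(s, a) *)
Variables (P : 'I_n -> A -> 'I_n -> R) (r : 'I_n -> A -> R) (gamma : R).

Definition spanR (e : 'I_n -> R) : R := sup (range e) - inf (range e).

Definition Ppi (pi : {ffun 'I_n -> A}) : 'M[R]_n := \matrix_(i, j) P i (pi i) j.
Definition rpi (pi : {ffun 'I_n -> A}) : 'cV[R]_n := \col_i r i (pi i).

(* value of policy pi: V^pi(s) = sum_{t>=0} gamma^t E[r(s_t, pi(s_t)) | s_0 = s]
   where E[r(s_t,pi(s_t)) | s_0 = s] = ((P_pi)^t r_pi)(s). *)
Definition Vpi (pi : {ffun 'I_n -> A}) (s : 'I_n) : R :=
  limn (series ((fun t : nat => gamma ^+ t * ((Ppi pi ^+ t) *m rpi pi) s ord0) : R^nat)).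

Definition Vstar (s : 'I_n) : R := sup (range (fun pi : {ffun 'I_n -> A} => Vpi pi s)).

Definition Qval (V : 'I_n -> R) (s : 'I_n) (a : A) : R :=
  r s a + gamma * \sum_(s' < n) P s a s' * V s'.

Definition bellman (V : 'I_n -> R) : 'I_n -> R :=
  fun s => sup (range (fun a : A => Qval V s a)).

Definition VI (V0 : 'I_n -> R) (t : nat) : 'I_n -> R := iter t bellman V0.

End MDP.

Definition irreducible (R : realType) (n : nat) (M : 'M[R]_n) : Prop :=
  forall i j : 'I_n, exists k : nat, 0 < (M ^+ k) i j.

Definition aperiodic (R : realType) (n : nat) (M : 'M[R]_n) : Prop :=
  forall i : 'I_n, forall d : nat,
    (forall k : nat, (0 < k)%N -> 0 < (M ^+ k) i i -> (d %| k)%N) -> d = 1%N.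

From HB Require Import structures.
From mathcomp Require Import all_boot all_order all_algebra.
From mathcomp Require Import all_classical all_reals all_analysis.
From mathcomp Require Import ring lra.
Set Implicit Arguments. Unset Strict Implicit. Unset Printing Implicit Defensive.
Import Order.TTheory GRing.Theory Num.Theory numFieldNormedType.Exports.
Local Open Scope ring_scope.
Local Open Scope classical_set_scope.

(* The gap condition makes pistar greedy for V*, hence V* = r_pistar + gamma P_pistar V*,
   and the Bellman operator gives two one-sided bounds on e_t = V_t - V*:
   e_{t+1} <= gamma max e_t (no action beats V* in one step) and
   e_{t+1} >= gamma P_pistar e_t (evaluate the max at pistar).  Iterating N
   times, max e_N <= gamma^N max e_0 while e_N >= gamma^N (P_pistar)^N e_0; as
   every entry of (P_pistar)^N is at least some c > 0, each row average of e_0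
   exceeds min e_0 by at least c span(e_0), so span(e_N) <= gamma^N (1-c) span(e_0). *)

Section FiniteSupInf.
Variables (R : realType) (T : finType).
Implicit Types (f : T -> R) (B : R).

Lemma sup_range_ub f t : f t <= sup (range f).
Proof.
apply: sup_upper_bound; last by exists t.
split; first by exists (f t), t.
exists (\sum_u `|f u|) => _ [u _ <-].
apply: le_trans (ler_norm _) _.
by rewrite (bigD1 u) //= lerDl sumr_ge0.
Qed.

Lemma sup_range_le f B (t0 : T) : (forall t, f t <= B) -> sup (range f) <= B.
Proof. by move=> fB; apply: ge_sup; [exists (f t0), t0 | move=> _ [u _ <-]]. Qed.

Lemma inf_range_lb f t : inf (range f) <= f t.
Proof.
apply: ge_inf; last by exists t.
exists (- \sum_u `|f u|) => _ [u _ <-].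
rewrite lerNl; apply: le_trans (ler_norm (- f u)) _; rewrite normrN.
by rewrite (bigD1 u) //= lerDl sumr_ge0.
Qed.

Lemma inf_range_ge f B (t0 : T) : (forall t, B <= f t) -> B <= inf (range f).
Proof. by move=> Bf; apply: lb_le_inf; [exists (f t0), t0 | move=> _ [u _ <-]]. Qed.

Lemma fin_pos_lower_bound f b : 0 < b -> (forall t, 0 < f t) ->
  exists c, [/\ 0 < c, c <= b & forall t, c <= f t].
Proof.
move=> b_gt0 f_gt0; exists (\big[Order.min/b]_t f t); split.
- by apply: lt_bigmin.
- exact: bigmin_le_id.
- by move=> t; apply: bigmin_le.
Qed.

End FiniteSupInf.

Lemma spanR_ord0 (R : realType) (f : 'I_0 -> R) : spanR f = 0.
Proof.
rewrite /spanR; have -> : range f = set0 by apply/seteqP; split => // y [[]].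
by rewrite sup0 inf0 subr0.
Qed.

Lemma spanR_le (R : realType) (n : nat) (f : 'I_n -> R) (lo hi : R) (s0 : 'I_n) :
  (forall s, lo <= f s) -> (forall s, f s <= hi) -> spanR f <= hi - lo.
Proof.
move=> lo_f f_hi; apply: lerB; first exact: (sup_range_le s0).
exact: (inf_range_ge s0).
Qed.

Section WeightedAverage.
Variables (R : realType) (n : nat) (p : 'I_n -> R).
Hypotheses (p_ge0 : forall j, 0 <= p j) (p_sum1 : \sum_j p j = 1).

Lemma wavg_le (x : 'I_n -> R) B : (forall j, x j <= B) -> \sum_j p j * x j <= B.
Proof.
move=> xB; rewrite -[B]mul1r -p_sum1 mulr_suml.
by apply: ler_sum => j _; apply: ler_wpM2l.
Qed.

Lemma wavg_ge (x : 'I_n -> R) B : (forall j, B <= x j) -> B <= \sum_j p j * x j.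
Proof.
move=> Bx; rewrite -[B]mul1r -p_sum1 mulr_suml.
by apply: ler_sum => j _; apply: ler_wpM2l.
Qed.

Lemma wavg_ge_mix (x : 'I_n -> R) c : 0 <= c -> (forall j, c <= p j) ->
  inf (range x) + c * spanR x <= \sum_j p j * x j.
Proof.
move=> c_ge0 c_le_p; set I := inf (range x).
have exc_ge0 j : 0 <= x j - I by rewrite subr_ge0 inf_range_lb.
have [j0 _] : exists j : 'I_n, true.
  case: (posnP n) => [n0|n_gt0]; last by exists (Ordinal n_gt0).
  have no_j (j : 'I_n) : False by case: j => j; rewrite n0.
  have : \sum_j p j = 0 by apply: big1 => j; case: (no_j j).
  by rewrite p_sum1 => /eqP; rewrite oner_eq0.
have -> : \sum_j p j * x j = I + \sum_j p j * (x j - I).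
  under [in RHS]eq_bigr do rewrite mulrBr.
  by rewrite sumrB -mulr_suml p_sum1 mul1r addrC subrK.
rewrite lerD2l; apply: le_trans (_ : c * \sum_j (x j - I) <= _).
  apply: ler_wpM2l => //; rewrite /spanR lerBlDr; apply: (sup_range_le j0) => k.
  by rewrite -lerBlDr (bigD1 k) //= lerDl sumr_ge0.
by rewrite mulr_sumr; apply: ler_sum => j _; apply: ler_wpM2r.
Qed.

End WeightedAverage.

Definition row_stochastic (R : realType) (n : nat) (M : 'M[R]_n) : Prop :=
  (forall i j, 0 <= M i j) /\ (forall i, \sum_j M i j = 1).

Lemma row_stochasticX (R : realType) (n : nat) (M : 'M[R]_n) t :
  row_stochastic M -> row_stochastic (M ^+ t).
Proof.
move=> [M_ge0 M_sum1]; elim: t => [|t [Mt_ge0 Mt_sum1]].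
  rewrite expr0; split => [i j|i]; first by rewrite mxE ler0n.
  rewrite (bigD1 i) //= mxE eqxx big1 ?addr0 // => j /negPf.
  by rewrite mxE eq_sym => ->.
rewrite exprS -mulmxE; split => [i j|i].
  by rewrite mxE sumr_ge0 // => k _; rewrite mulr_ge0.
under eq_bigr do rewrite mxE.
rewrite exchange_big /=.
under eq_bigr do rewrite -mulr_sumr Mt_sum1 mulr1.
exact: M_sum1.
Qed.

Lemma row_stochastic_le1 (R : realType) (n : nat) (M : 'M[R]_n) i j :
  row_stochastic M -> M i j <= 1.
Proof. by move=> [M_ge0 M_sum1]; rewrite -(M_sum1 i) (bigD1 j) //= lerDl sumr_ge0. Qed.

Section MDP.
Variables (R : realType) (n : nat) (A : finType).
Variables (P : 'I_n -> A -> 'I_n -> R) (r : 'I_n -> A -> R) (gamma : R).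
Hypotheses (P_ge0 : forall s a s', 0 <= P s a s')
  (P_sum1 : forall s a, \sum_(s' < n) P s a s' = 1).
Hypotheses (gamma_ge0 : 0 <= gamma) (gamma_lt1 : gamma < 1).

Local Notation Q := (Qval P r gamma).
Local Notation Vs := (Vstar P r gamma).

Lemma Ppi_stochastic pi : row_stochastic (Ppi P pi).
Proof.
split=> [i j|i]; first by rewrite mxE.
by under eq_bigr do rewrite mxE; exact: P_sum1.
Qed.

Lemma QvalB V W s a : Q V s a - Q W s a = gamma * \sum_j P s a j * (V j - W j).
Proof.
rewrite /Qval; under [in RHS]eq_bigr do rewrite mulrBr.
rewrite sumrB; ring.
Qed.

Lemma Qval_le V W s a : (forall j, V j <= W j) -> Q V s a <= Q W s a.
Proof.
move=> VW; rewrite -subr_ge0 QvalB mulr_ge0 // sumr_ge0 // => j _.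
by rewrite mulr_ge0 // subr_ge0.
Qed.

Let disc_reward pi s t := gamma ^+ t * ((Ppi P pi ^+ t *m rpi r pi) s ord0).

Lemma disc_reward_summable pi s : cvgn (series (disc_reward pi s)).
Proof.
apply: normed_cvg; pose B := \sum_k `|r k (pi k)|.
apply: (@series_le_cvg _ _ (geometric B gamma)) => [t|t|t|].
- exact: normr_ge0.
- by rewrite /geometric /= mulr_ge0 ?sumr_ge0 ?exprn_ge0.
- rewrite /geometric /= /disc_reward normrM ger0_norm ?exprn_ge0 // mulrC.
  apply: ler_wpM2r; first exact: exprn_ge0.
  rewrite mxE; apply: le_trans (ler_norm_sum _ _ _) _.
  have Mt := row_stochasticX t (Ppi_stochastic pi).
  apply: ler_sum => k _; rewrite normrM ger0_norm ?(proj1 Mt) // mxE.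
  by apply: ler_piMl => //; apply: row_stochastic_le1.
- by apply: is_cvg_geometric_series; rewrite ger0_norm.
Qed.

Lemma series_disc_reward_succ pi s k : series (disc_reward pi s) k.+1 =
  r s (pi s) + gamma * \sum_j P s (pi s) j * series (disc_reward pi j) k.
Proof.
rewrite /series /= big_nat_recl // /disc_reward expr0 mul1r expr0 mul1mx mxE.
congr (_ + _); under [in RHS]eq_bigr do rewrite mulr_sumr.
rewrite exchange_big mulr_sumr /=; apply: eq_bigr => t _.
rewrite exprS [Ppi P pi ^+ _]exprS -mulmxE -mulmxA mxE mulr_sumr mulr_sumr.
by apply: eq_bigr => j _; rewrite [Ppi P pi s j]mxE; ring.
Qed.

Lemma Vpi_fixpoint pi s : Vpi P r gamma pi s = Q (Vpi P r gamma pi) s (pi s).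
Proof.
have shifted : [sequence series (disc_reward pi s) k.+1]_k @ \oo -->
    Q (Vpi P r gamma pi) s (pi s).
  under eq_fun do rewrite series_disc_reward_succ.
  apply: cvgD; first exact: cvg_cst.
  apply: cvgM; first exact: cvg_cst.
  apply: (cvg_big add_continuous) => j _.
  by apply: cvgM; [exact: cvg_cst | exact: disc_reward_summable].
rewrite -(cvg_lim (@norm_hausdorff _ _) shifted); apply/esym/cvg_lim => //.
by rewrite cvg_shiftS; exact: disc_reward_summable.
Qed.

Lemma Vpi_le_Vstar pi s : Vpi P r gamma pi s <= Vs s.
Proof. exact: (sup_range_ub (fun pi => Vpi P r gamma pi s)). Qed.

Lemma Qval_le_bellman V s a : Q V s a <= bellman P r gamma V s.
Proof. exact: (sup_range_ub (fun a => Q V s a)). Qed.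

Section GreedyOptimal.
Variable pistar : {ffun 'I_n -> A}.
Hypothesis pistar_greedy : forall s a, Q Vs s a <= Q Vs s (pistar s).

Lemma Vstar_le_Qval_greedy s : Vs s <= Q Vs s (pistar s).
Proof.
apply: (sup_range_le pistar) => pi; rewrite Vpi_fixpoint.
apply: le_trans (pistar_greedy s (pi s)).
by apply: Qval_le => j; apply: Vpi_le_Vstar.
Qed.

(* [d := V^pistar - V*] satisfies [d >= gamma * inf d], which forces [inf d >= 0]
   because [gamma < 1]. *)
Lemma Vstar_le_Vpi_greedy s : Vs s <= Vpi P r gamma pistar s.
Proof.
pose d j := Vpi P r gamma pistar j - Vs j.
have d_ge j : gamma * inf (range d) <= d j.
  apply: le_trans (_ : Q (Vpi P r gamma pistar) j (pistar j) - Q Vs j (pistar j) <= _).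
    rewrite QvalB; apply: ler_wpM2l => //.
    by apply: wavg_ge => // k; apply: inf_range_lb.
  by rewrite /d [Vpi _ _ _ _ j]Vpi_fixpoint lerD2l lerN2 Vstar_le_Qval_greedy.
have inf_d_ge0 : 0 <= inf (range d).
  have : gamma * inf (range d) <= inf (range d) := inf_range_ge s d_ge.
  by rewrite -subr_ge0 -{1}[inf _]mul1r -mulrBl pmulr_rge0 // subr_gt0.
by have := le_trans inf_d_ge0 (inf_range_lb d s); rewrite subr_ge0.
Qed.

Lemma Vstar_fixpoint s : Vs s = Q Vs s (pistar s).
Proof.
apply/eqP; rewrite eq_le Vstar_le_Qval_greedy /=.
apply: le_trans (Vpi_le_Vstar pistar s); rewrite Vpi_fixpoint.
by apply: Qval_le => j; apply: Vstar_le_Vpi_greedy.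
Qed.

Lemma Qval_Vstar_le s a : Q Vs s a <= Vs s.
Proof. by rewrite Vstar_fixpoint; apply: pistar_greedy. Qed.

Lemma bellman_err_le V s B : (forall j, V j - Vs j <= B) ->
  bellman P r gamma V s - Vs s <= gamma * B.
Proof.
move=> VB; rewrite lerBlDr; apply: (sup_range_le (pistar s)) => a.
rewrite -lerBlDr; apply: le_trans (_ : Q V s a - Q Vs s a <= _).
  by rewrite lerD2l lerN2 Qval_Vstar_le.
by rewrite QvalB; apply: ler_wpM2l => //; apply: wavg_le.
Qed.

Lemma bellman_err_ge V s :
  gamma * \sum_j P s (pistar s) j * (V j - Vs j) <= bellman P r gamma V s - Vs s.
Proof. by rewrite -QvalB Vstar_fixpoint lerD2r Qval_le_bellman. Qed.

Lemma VI_err_le V0 B t s : (forall j, V0 j - Vs j <= B) ->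
  VI P r gamma V0 t s - Vs s <= gamma ^+ t * B.
Proof.
move=> V0B; elim: t s => [|t IH] s; first by rewrite mul1r.
by rewrite exprS -mulrA; apply: bellman_err_le.
Qed.

Lemma VI_err_ge V0 t s :
  gamma ^+ t * ((Ppi P pistar ^+ t) *m \col_j (V0 j - Vs j)) s ord0
    <= VI P r gamma V0 t s - Vs s.
Proof.
elim: t s => [|t IH] s; first by rewrite mul1r mul1mx mxE.
apply: le_trans (bellman_err_ge _ s).
rewrite exprS [Ppi P pistar ^+ _]exprS -mulmxE -mulmxA mxE -mulrA mulr_sumr.
apply: ler_wpM2l => //; apply: ler_sum => j _.
by rewrite [Ppi P pistar s j]mxE mulrCA; apply: ler_wpM2l.
Qed.

End GreedyOptimal.

End MDP.

Theorem theorem1 (R : realType) (n : nat) (A : finType)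
  (P : 'I_n -> A -> 'I_n -> R) (r : 'I_n -> A -> R) (gamma : R)
  (HA : (0 < #|A|)%N)
  (HP0 : forall s a s', 0 <= P s a s')
  (HP1 : forall s a, \sum_(s' < n) P s a s' = 1)
  (Hg0 : 0 <= gamma) (Hg1 : gamma < 1)
  (pistar : {ffun 'I_n -> A}) (delta : R) (Hdelta : 0 < delta)
  (Hgap : forall (s : 'I_n) (a' : A), a' != pistar s ->
     Qval P r gamma (Vstar P r gamma) s (pistar s)
       - Qval P r gamma (Vstar P r gamma) s a' >= delta)
  (Hirr : irreducible (Ppi P pistar))
  (Haper : aperiodic (Ppi P pistar))
  (N : nat) (HN : (1 <= N)%N)
  (HNpos : forall i j : 'I_n, 0 < ((Ppi P pistar) ^+ N) i j)
  (V0 : 'I_n -> R) :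
  let e := fun t : nat => fun s : 'I_n => VI P r gamma V0 t s - Vstar P r gamma s in
  exists tau : R, 0 < tau /\ tau < 1 /\
    spanR (e N) <= gamma ^+ N * tau * spanR (e 0%N).
Proof.
move=> e.
have [n0|n_gt0] := posnP n.
  subst n; exists 2^-1; rewrite !spanR_ord0 mulr0 invr_gt0 invf_lt1 ?ltr0n ?ltr1n //.
have greedy s a : Qval P r gamma (Vstar P r gamma) s a
    <= Qval P r gamma (Vstar P r gamma) s (pistar s).
  by case: (eqVneq a (pistar s)) => [->//|/Hgap]; lra.
have half_gt0 : 0 < 2^-1 :> R by rewrite invr_gt0 ltr0n.
have [c [c_gt0 c_le_half c_le]] := @fin_pos_lower_bound R _
  (fun ij : 'I_n * 'I_n => (Ppi P pistar ^+ N) ij.1 ij.2) _ half_gt0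
  (fun ij => HNpos ij.1 ij.2).
have [_ PN_sum1] := row_stochasticX N (Ppi_stochastic HP0 HP1 pistar).
exists (1 - c); split; [lra | split; [lra |]].
set S := sup (range (e 0%N)); set I := inf (range (e 0%N)).
have eN_ge s : gamma ^+ N * (I + c * spanR (e 0%N)) <= e N s.
  apply: le_trans (VI_err_ge HP0 HP1 Hg0 Hg1 greedy V0 N s).
  rewrite ler_wpM2l ?exprn_ge0 // mxE; under eq_bigr => j _ do rewrite [_ j ord0]mxE.
  by apply: wavg_ge_mix => // [|j]; [exact: ltW | exact: (c_le (s, j))].
have eN_le s : e N s <= gamma ^+ N * S.
  by apply: (VI_err_le HP0 HP1 Hg0 Hg1 greedy) => j; apply: sup_range_ub.
apply: le_trans (spanR_le (Ordinal n_gt0) eN_ge eN_le) _.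
rewrite /spanR -/S -/I; lra.
Qed.
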